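(* Let $\alpha\in(0,1/2)$ and $q_1,q_3\in(0,1)$ satisfy $\frac{4\alpha+1}{1-q_3}+\frac{3-4\alpha}{1-q_1}<\frac{8(4\alpha+3)}{3}$ together with either (1) $\alpha>1/4$ and $(12\alpha+3)q_3+(3-4\alpha)q_1>8\alpha+3$, or (2) $\alpha\le 1/4$ and $6q_3+2q_1>5$. Then the $q_3$-elasticity of $q_1$, defined as $-\dfrac{(q_1-1/4)/(1/4)}{(q_3-3/4)/(3/4)}$, is greater than $9$.
   Context: Here $1/4$ and $3/4$ are the status quo recommendation qualities of the low and high user segments, and $q_1,q_3$ the treatment's qualities of those segments. *)

From Stdlib Require Import Reals Lra.
Open Scope R_scope.

(* Status quo recommendation qualities of the low and high user segments. *)
Definition sq_low : R := 1/4.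
Definition sq_high : R := 3/4.

Definition elasticity_q3_q1 (q1 q3 : R) : R :=
  - (((q1 - sq_low) / sq_low) / ((q3 - sq_high) / sq_high)).

(* Each term of the constraint lies above its tangent line at the status quo
   point (1 - q3 = 1/4, 1 - q1 = 3/4), and the constants of the two tangent
   lines add up to twice the right-hand side.  The convex constraint thus
   implies the linear inequality (3 - 4a)(q1 - 1/4) < 9(4a + 1)(3/4 - q3).
   The elasticity equals 3 (q1 - 1/4) / (3/4 - q3), so it exceeds 9 as soon
   as q3 < 3/4 and q1 - 1/4 > 3 (3/4 - q3); in either case the side
   condition together with the linear inequality gives both facts. *)
From Stdlib Require Import Reals Lra Psatz.
Open Scope R_scope.

Lemma inv_ge_tangent (c x : R) : 0 < c -> 0 < x -> (2 * c - x) / c ^ 2 <= / x.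
Proof.
  intros Hc Hx.
  assert (Hgap : / x - (2 * c - x) / c ^ 2 = (x - c) ^ 2 / (c ^ 2 * x))
    by (field; lra).
  assert (0 <= (x - c) ^ 2 / (c ^ 2 * x)).
  { apply Rle_mult_inv_pos; [apply pow2_ge_0 | apply Rmult_lt_0_compat; nra]. }
  lra.
Qed.

Lemma linearized_constraint (alpha q1 q3 : R) :
  0 < alpha < 1/2 -> q1 < 1 -> q3 < 1 ->
  (4 * alpha + 1) / (1 - q3) + (3 - 4 * alpha) / (1 - q1)
    < 8 * (4 * alpha + 3) / 3 ->
  (3 - 4 * alpha) * (q1 - 1/4) < 9 * (4 * alpha + 1) * (3/4 - q3).
Proof.
  intros Ha H1 H3 Hc.
  assert (T3 := inv_ge_tangent (1/4) (1 - q3) ltac:(lra) ltac:(lra)).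
  assert (T1 := inv_ge_tangent (3/4) (1 - q1) ltac:(lra) ltac:(lra)).
  replace ((2 * (1/4) - (1 - q3)) / (1/4) ^ 2) with (16 * q3 - 8) in T3
    by field.
  replace ((2 * (3/4) - (1 - q1)) / (3/4) ^ 2) with ((16 * q1 + 8) / 9) in T1
    by field.
  apply (Rmult_le_compat_l (4 * alpha + 1)) in T3; [|lra].
  apply (Rmult_le_compat_l (3 - 4 * alpha)) in T1; [|lra].
  unfold Rdiv in Hc.
  lra.
Qed.

Lemma elasticity_q3_q1_eq (q1 q3 : R) :
  q3 <> sq_high -> elasticity_q3_q1 q1 q3 = 3 * (q1 - sq_low) / (sq_high - q3).
Proof.
  unfold elasticity_q3_q1, sq_low, sq_high; intros Hq3.
  field; split; lra.
Qed.

Lemma elasticity_q3_q1_gt_9 (q1 q3 : R) :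
  q3 < sq_high -> 3 * (sq_high - q3) < q1 - sq_low -> elasticity_q3_q1 q1 q3 > 9.
Proof.
  intros Hq3 Hgain.
  rewrite elasticity_q3_q1_eq by lra.
  apply Rlt_gt, Rmult_lt_reg_r with (sq_high - q3); [lra|].
  unfold Rdiv; rewrite Rmult_assoc, Rinv_l by lra.
  lra.
Qed.

Section LinearBounds.

Variables A B s t : R.
Hypotheses (HA : 0 < A) (HB : 0 < B) (Hlin : B * t < 9 * A * s).

Lemma pos_gain_of_lower_bound : B <= A -> 3 * A * s < B * t -> 0 < s /\ 3 * s < t.
Proof.
  intros HBA Hlow.
  assert (Hs : 0 < s) by nra.
  split; [exact Hs|].
  apply (Rmult_lt_reg_l B); nra.
Qed.

Lemma pos_of_gain : B < 3 * A -> 3 * s < t -> 0 < s.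
Proof. intros HBA Hgain; nra. Qed.

End LinearBounds.

Theorem corollaryA1 (alpha q1 q3 : R) :
  0 < alpha < 1/2 ->
  0 < q1 < 1 ->
  0 < q3 < 1 ->
  (4 * alpha + 1) / (1 - q3) + (3 - 4 * alpha) / (1 - q1)
    < 8 * (4 * alpha + 3) / 3 ->
  ((1/4 < alpha /\ (12 * alpha + 3) * q3 + (3 - 4 * alpha) * q1 > 8 * alpha + 3)
   \/ (alpha <= 1/4 /\ 6 * q3 + 2 * q1 > 5)) ->
  elasticity_q3_q1 q1 q3 > 9.
Proof.
  intros Ha H1 H3 Hc Hcase.
  assert (Hlin := linearized_constraint alpha q1 q3 Ha (proj2 H1) (proj2 H3) Hc).
  assert (Hgoal : 0 < 3/4 - q3 /\ 3 * (3/4 - q3) < q1 - 1/4).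
  { destruct Hcase as [[Hal Hside] | [_ Hside]].
    - apply (pos_gain_of_lower_bound (4 * alpha + 1) (3 - 4 * alpha)); nra.
    -
      split; [|lra].
      apply (pos_of_gain (4 * alpha + 1) (3 - 4 * alpha) _ (q1 - 1/4)); lra.
  }
  apply elasticity_q3_q1_gt_9; unfold sq_low, sq_high; lra.
Qed.
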